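(* Let $n\ge1$, identify $\mathbb{R}^{n+1}=\mathbb{R}^n\times\mathbb{R}$, let $I$ be a finite nonempty index set and $f_i\colon\mathbb{R}^n\to(0,\infty)$ ($i\in I$) continuous functions with epigraphs $L_i=\{(x,y)\mid f_i(x)\le y\}$. Let $K\subset\mathbb{R}^{n+1}$ be a nonempty closed set containing a point whose last coordinate is $\le 0$, with $K\cap L_i=\emptyset$ for all $i\in I$. Let $f_{\min}(x)=\min\{f_i(x)\mid i\in I\}$, with epigraph $L=\bigcup_{i\in I}L_i$. Let $G_i^\pm$ be the upper/lower equidistant functions associated with $K$ and $L_i$, and $G_{\min}^\pm$ those associated with $K$ and $L$. Then for every $x\in\mathbb{R}^n$, $$\min\{G_i^-(x)\mid i\in I\}\le G_{\min}^-(x)\le G_{\min}^+(x)\le\min\{G_i^+(x)\mid i\in I\}.$$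
   Context: $d(p,A)=\inf\{|p-q|\mid q\in A\}$ (Euclidean distance). For a closed set $K$ and epigraph $M$ of a positive continuous function with $K\cap M=\emptyset$, the upper and lower equidistant functions are $G^+(x)=\sup\{y\mid d((x,y),K)=d((x,y),M)\}$ and $G^-(x)=\inf\{y\mid d((x,y),K)=d((x,y),M)\}$ (these are real numbers under the stated assumptions). *)

From HB Require Import structures.
From mathcomp Require Import all_boot all_order all_algebra.
From mathcomp Require Import all_classical all_reals all_analysis.
Set Implicit Arguments. Unset Strict Implicit. Unset Printing Implicit Defensive.
Import Order.TTheory GRing.Theory Num.Theory.
Import numFieldNormedType.Exports.
Local Open Scope classical_set_scope.
Local Open Scope ring_scope.

Section Defs.
Variables (R : realType) (n : nat).

Definition edist (p q : 'rV[R]_n * R) : R :=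
  Num.sqrt (\sum_(i < n) (p.1 ord0 i - q.1 ord0 i) ^+ 2 + (p.2 - q.2) ^+ 2).

Definition distS (p : 'rV[R]_n * R) (A : set ('rV[R]_n * R)) : R :=
  inf [set edist p q | q in A].

Definition epi (f : 'rV[R]_n -> R) : set ('rV[R]_n * R) :=
  [set p | f p.1 <= p.2].

Definition Gplus (K M : set ('rV[R]_n * R)) (x : 'rV[R]_n) : R :=
  sup [set y | distS (x, y) K = distS (x, y) M].

Definition Gminus (K M : set ('rV[R]_n * R)) (x : 'rV[R]_n) : R :=
  inf [set y | distS (x, y) K = distS (x, y) M].

End Defs.

(* minimum of F over a finite index type I, nonempty as witnessed by i0 *)
Definition fmin (R : realType) (I : finType) (i0 : I) (F : I -> R) : R :=
  \big[Order.min/F i0]_(i : I) F i.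

From Pilot Require Import Defs.
From HB Require Import structures.
From mathcomp Require Import all_boot all_order all_algebra.
From mathcomp Require Import all_classical all_reals all_analysis.
From mathcomp Require Import lra.
Import Order.TTheory GRing.Theory Num.Theory.
Import numFieldNormedType.Exports.
Local Open Scope classical_set_scope.
Local Open Scope ring_scope.
Set Implicit Arguments. Unset Strict Implicit.

(* Fix x and write a(y), b_i(y), b(y) for the distances from (x, y) to K, L_i
   and L = U_i L_i, so that b = min_i b_i; G^- and G^+ are the infimum and
   supremum of the zero set of a - b (resp. a - b_i). All these distances are
   1-Lipschitz in y. For y >= f_i(x) we have b_i(y) = 0 < a(y), as K is closed
   and misses L_i. For y -> -oo we have a(y) < b_i(y): K has a point at height
   <= 0, whereas f_i is bounded below by a positive constant near x. So every
   zero set is nonempty and bounded. A zero y of a - b is a zero of some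
   a - b_j, which gives the lower inequality; and a(y) = b(y) <= b_i(y), so by
   the intermediate value theorem a - b_i vanishes in [y, max(y, f_i(x))],
   which gives the upper one. *)

Section fmin.
Variables (R : realType) (I : finType) (i0 : I).
Implicit Types F : I -> R.

Lemma fmin_attained F : exists j, fmin i0 F = F j.
Proof.
rewrite /fmin; elim/big_ind: _ => [|a b [j ->] [k ->]|i _]; last by exists i.
- by exists i0.
- by rewrite /Order.min; case: ifP => _; [exists j|exists k].
Qed.

Lemma fmin_le F j : fmin i0 F <= F j.
Proof. exact: bigmin_le. Qed.

Lemma le_fmin F c : (forall j, c <= F j) -> c <= fmin i0 F.
Proof. by move=> h; apply: le_bigmin. Qed.

End fmin.

Section distance.
Variables (R : realType) (n : nat).
Implicit Types (x z : 'rV[R]_n) (p q : 'rV[R]_n * R) (A : set ('rV[R]_n * R)).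

Definition hdist2 x z : R := \sum_(i < n) (x ord0 i - z ord0 i) ^+ 2.

Lemma edistE p q : Defs.edist p q = Num.sqrt (hdist2 p.1 q.1 + (p.2 - q.2) ^+ 2).
Proof. by []. Qed.

Lemma hdist2_ge0 x z : 0 <= hdist2 x z.
Proof. by apply: sumr_ge0 => i _; exact: sqr_ge0. Qed.

Lemma sqr_coord_le_hdist2 x z j : (x ord0 j - z ord0 j) ^+ 2 <= hdist2 x z.
Proof.
by rewrite /hdist2 (bigD1 j) //= lerDl; apply: sumr_ge0 => i _; exact: sqr_ge0.
Qed.

Lemma normB_le_hdist2 x z : `|x - z| <= Num.sqrt (hdist2 x z).
Proof.
rewrite [leLHS]/Num.norm /= mx_normrE; apply: bigmax_le => [|[i j] _ /=].
  exact: sqrtr_ge0.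
by rewrite [i]ord1 !mxE -sqrtr_sqr ler_sqrt ?hdist2_ge0 ?sqr_coord_le_hdist2.
Qed.

Lemma edist_ge0 p q : 0 <= Defs.edist p q.
Proof. exact: sqrtr_ge0. Qed.

Lemma edist_xx p : Defs.edist p p = 0.
Proof.
rewrite edistE subrr expr0n addr0 /hdist2 big1 ?sqrtr0 // => i _.
by rewrite subrr expr0n.
Qed.

Lemma edist_ge_snd p q : `|p.2 - q.2| <= Defs.edist p q.
Proof.
by rewrite edistE -sqrtr_sqr ler_sqrt ?addr_ge0 ?hdist2_ge0 ?sqr_ge0 // lerDr hdist2_ge0.
Qed.

Lemma edist_ge_coord p q j : `|p.1 ord0 j - q.1 ord0 j| <= Defs.edist p q.
Proof.
rewrite edistE -sqrtr_sqr ler_sqrt ?addr_ge0 ?hdist2_ge0 ?sqr_ge0 //.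
by apply: le_trans (sqr_coord_le_hdist2 _ _ j) _; rewrite lerDl sqr_ge0.
Qed.

Lemma sqrtD_sqr_lipschitz (s u v : R) : 0 <= s ->
  Num.sqrt (s + u ^+ 2) <= Num.sqrt (s + v ^+ 2) + `|u - v|.
Proof.
move=> s0; set T := Num.sqrt (s + v ^+ 2).
have T0 : 0 <= T by exact: sqrtr_ge0.
have TT : T ^+ 2 = s + v ^+ 2 by rewrite sqr_sqrtr // addr_ge0 // sqr_ge0.
have vT : `|v| <= T by rewrite -sqrtr_sqr ler_sqrt ?addr_ge0 ?sqr_ge0 // lerDr.
rewrite -[leRHS]ger0_norm ?addr_ge0 // -sqrtr_sqr ler_sqrt ?sqr_ge0 //.
have cross : v * (u - v) <= T * `|u - v|.
  apply: le_trans (ler_wpM2r (normr_ge0 _) vT).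
  by rewrite -normrM real_ler_norm ?num_real.
have e : (u - v) ^+ 2 = `|u - v| ^+ 2 by rewrite real_normK ?num_real.
rewrite sqrrD TT; nra.
Qed.

Lemma edist_lipschitz_snd x y y' q :
  Defs.edist (x, y) q <= Defs.edist (x, y') q + `|y - y'|.
Proof.
rewrite !edistE /= [y - y'](_ : _ = (y - q.2) - (y' - q.2)).
  exact/sqrtD_sqr_lipschitz/hdist2_ge0.
by rewrite opprB addrA subrK.
Qed.

Lemma distS_le_edist p A q : A q -> distS p A <= Defs.edist p q.
Proof.
move=> Aq; apply: ge_inf; last by exists q.
by exists 0 => _ [r _ <-]; exact: edist_ge0.
Qed.

Lemma le_distS p A c : A !=set0 -> (forall q, A q -> c <= Defs.edist p q) ->
  c <= distS p A.
Proof.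
move=> [q Aq] h; apply: lb_le_inf; first by exists (Defs.edist p q), q.
by move=> _ [r Ar <-]; exact: h.
Qed.

Lemma distS_ge0 p A : A !=set0 -> 0 <= distS p A.
Proof. by move=> A0; apply: le_distS => // q _; exact: edist_ge0. Qed.

Lemma distS_eq0 p A : A p -> distS p A = 0.
Proof.
move=> Ap; apply/eqP; rewrite eq_le distS_ge0 ?andbT; last by exists p.
by rewrite -(edist_xx p) distS_le_edist.
Qed.

Lemma distS_gt0 p A : closed A -> A !=set0 -> ~ A p -> 0 < distS p A.
Proof.
move=> cA A0 Ap.
have /nbhs_ballP [e e0 he] : nbhs p (~` A).
  by apply: open_nbhs_nbhs; split => //; exact: closed_openC.
apply: lt_le_trans e0 _; apply: le_distS => // q Aq.
rewrite leNgt; apply/negP => lt; apply: (he q) => //; split; last first.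
  by apply: le_lt_trans lt; exact: edist_ge_snd.
split; first exact: le_lt_trans (edist_ge0 p q) lt.
by move=> i j; rewrite [i]ord1; apply: le_lt_trans lt; exact: edist_ge_coord.
Qed.

Lemma distS_bigcup (I : finType) (i0 : I) (B : I -> set ('rV[R]_n * R)) p :
  (forall i, B i !=set0) ->
  distS p (\bigcup_i B i) = fmin i0 (fun i => distS p (B i)).
Proof.
move=> B0; have [j Bj0] := B0 i0.
apply/eqP; rewrite eq_le; apply/andP; split.
  have [k ->] := fmin_attained i0 (fun i => distS p (B i)).
  by apply: le_distS => // q Bq; apply: distS_le_edist; exists k.
apply: le_distS; first by exists j; exists i0.
move=> q [k _ Bq]; apply: le_trans (fmin_le _ _ k) _; exact: distS_le_edist.
Qed.

Lemma distS_lipschitz_snd x y y' A : A !=set0 ->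
  `|distS (x, y) A - distS (x, y') A| <= `|y - y'|.
Proof.
move=> A0; have le_dist y1 y2 : distS (x, y1) A <= distS (x, y2) A + `|y1 - y2|.
  rewrite -lerBlDr; apply: le_distS => // q Aq; rewrite lerBlDr.
  exact: le_trans (distS_le_edist _ Aq) (edist_lipschitz_snd x y1 y2 q).
by have := le_dist y y'; have := le_dist y' y; rewrite distrC ler_norml; lra.
Qed.

Lemma continuous_distS_snd x A : A !=set0 -> continuous (fun y => distS (x, y) A).
Proof.
move=> A0 y; apply/cvgrPdist_lt => e e0; apply/nbhs_ballP.
exists e => // t yt; exact: le_lt_trans (distS_lipschitz_snd _ _ _ A0) yt.
Qed.

End distance.

Lemma continuous_crossing (R : realType) (g h : R -> R) (a b : R) :
  continuous g -> continuous h -> a <= b -> g a <= h a -> h b <= g b ->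
  exists2 c, a <= c <= b & g c = h c.
Proof.
move=> cg ch ab ga hb.
have cgh : continuous (g - h) by move=> y; exact: continuousB (cg y) (ch y).
have [|c] := IVT (v := 0) ab (continuous_subspaceT cgh).
  by rewrite /= ge_min le_max !subr_le0 !subr_ge0 ga hb orbT.
by rewrite in_itv /= => abc /eqP; rewrite subr_eq0 => /eqP; exists c.
Qed.

Lemma continuous_pos_lbound_ball (R : realType) (n : nat) (f : 'rV[R]_n -> R) x r :
  0 <= r -> continuous f -> (forall z, 0 < f z) ->
  exists2 m, 0 < m & forall z, `|x - z| <= r -> m <= f z.
Proof.
move=> r0 cf fpos; pose C := closed_ball_ Num.norm x r.
have bC : [bounded z | z in C].
  rewrite /bounded_near; near=> M => z; rewrite /C /closed_ball_ /= => xz.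
  have : `|z| <= `|x| + r.
    rewrite -[z](subKr x); apply: le_trans (ler_normB _ _) _; exact: lerD.
  move/le_trans; apply; near: M; exact/nbhs_pinfty_ge/num_real.
have cC : compact C by apply: bounded_closed_compact => //; exact: closed_closed_ball_.
have C0 : C !=set0 by exists x; rewrite /C /closed_ball_ /= subrr normr0.
have [c Cc minf] := EVT_min_rV C0 cC (continuous_subspaceT cf).
by exists (f c) => // z xz; apply: minf; rewrite inE.
Unshelve. all: by end_near.
Qed.

Section epigraph.
Variables (R : realType) (n : nat).
Implicit Types (g : 'rV[R]_n -> R) (K : set ('rV[R]_n * R)).

Lemma epi_neq0 g : epi g !=set0.
Proof. by exists (0, g 0); rewrite /epi /=. Qed.

Lemma epi_fmin (I : finType) (i0 : I) (f : I -> 'rV[R]_n -> R) :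
  epi (fun x => fmin i0 (fun i => f i x)) = \bigcup_i epi (f i).
Proof.
apply/seteqP; split => [p|p [i _ fip]]; rewrite /epi /=.
  by have [j ->] := fmin_attained i0 (fun i => f i p.1); exists j.
exact: le_trans (fmin_le _ _ i) fip.
Qed.

Lemma distS_epi_ge_below g x y s m :
  (forall z, 0 < g z) -> 0 <= s -> (forall z, `|x - z| <= Num.sqrt s -> m <= g z) ->
  y <= 0 -> 2 * m * y <= - s -> Num.sqrt (s + y ^+ 2) <= distS (x, y) (epi g).
Proof.
move=> gpos s0 gm y0 ys; apply: le_distS; first exact: epi_neq0.
move=> [z w] /= gzw; rewrite edistE ler_sqrt ?addr_ge0 ?hdist2_ge0 ?sqr_ge0 //=.
have w0 : 0 < w by exact: lt_le_trans (gpos z) gzw.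
(* (z, w) is either horizontally far from x or at height >= m *)
have [sh|hs] := leP s (hdist2 x z); first by nra.
have mw : m <= w.
  apply: le_trans gzw; apply: gm; apply: le_trans (normB_le_hdist2 x z) _.
  by rewrite ler_sqrt // ltW.
have : 0 <= - y * (w - m) by apply: mulr_ge0; lra.
have := hdist2_ge0 x z; nra.
Qed.

Lemma distS_lt_epi_near_ninfty K g x p :
  continuous g -> (forall z, 0 < g z) -> K p -> p.2 <= 0 ->
  \forall y \near -oo, distS (x, y) K < distS (x, y) (epi g).
Proof.
move=> cg gpos Kp p0; pose s := hdist2 x p.1 + 1.
have s0 : 0 <= s by rewrite addr_ge0 ?hdist2_ge0.
have [m m0 gm] := continuous_pos_lbound_ball x (sqrtr_ge0 s) cg gpos.
near=> y.
have yp : y <= p.2 by near: y; exact/nbhs_ninfty_le/num_real.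
have ys : 2 * m * y <= - s.
  rewrite -ler_pdivlMl ?mulr_gt0 //; near: y; exact/nbhs_ninfty_le/num_real.
have y0 : y <= 0 := le_trans yp p0.
apply: le_lt_trans (distS_le_edist _ Kp) _; rewrite edistE /=.
apply: lt_le_trans (distS_epi_ge_below gpos s0 gm y0 ys).
have := hdist2_ge0 x p.1; have := sqr_ge0 y; rewrite /s => y2 hp.
rewrite ltr_sqrt; last lra.
have : 0 <= - p.2 * (p.2 - y - y) by apply: mulr_ge0; lra.
nra.
Unshelve. all: by end_near.
Qed.

End epigraph.

Definition equidistant (R : realType) (n : nat) (K M : set ('rV[R]_n * R))
    (x : 'rV[R]_n) : set R :=
  [set y | distS (x, y) K = distS (x, y) M].

Section equidistant_epi.
Variables (R : realType) (n : nat) (K : set ('rV[R]_n * R)) (x : 'rV[R]_n).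
Variable g : 'rV[R]_n -> R.
Hypotheses (cK : closed K) (K0 : K !=set0) (Kg : K `&` epi g = set0).

Lemma distS_epi_lt_above y : g x <= y -> distS (x, y) (epi g) < distS (x, y) K.
Proof.
move=> gy; rewrite distS_eq0 //; apply: distS_gt0 => // Kxy.
by have : (K `&` epi g) (x, y) by []; rewrite Kg.
Qed.

Lemma equidistant_epi_lt y : equidistant K (epi g) x y -> y < g x.
Proof.
by move=> Ey; rewrite ltNge; apply/negP => /distS_epi_lt_above; rewrite Ey ltxx.
Qed.

Lemma equidistant_epi_ge y : distS (x, y) K <= distS (x, y) (epi g) ->
  exists2 c, y <= c & equidistant K (epi g) x c.
Proof.
move=> le_y; have gx_le : g x <= Order.max y (g x) by rewrite le_max lexx orbT.
have [|c /andP[yc _] Ec] := continuous_crossing (continuous_distS_snd K0)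
  (continuous_distS_snd (epi_neq0 g)) _ le_y (ltW (distS_epi_lt_above gx_le)).
- by rewrite le_max lexx.
by exists c.
Qed.

Lemma le_sup_equidistant_epi y : distS (x, y) K <= distS (x, y) (epi g) ->
  y <= sup (equidistant K (epi g) x).
Proof.
move=> /equidistant_epi_ge [c yc Ec]; apply: le_trans yc (ub_le_sup _ Ec).
by exists (g x) => z /equidistant_epi_lt/ltW.
Qed.

End equidistant_epi.

Section equidistant_fmin.
Variables (R : realType) (n : nat) (I : finType) (i0 : I).
Variables (f : I -> 'rV[R]_n -> R) (K : set ('rV[R]_n * R)) (x : 'rV[R]_n) (M : R).
Hypotheses (cK : closed K) (K0 : K !=set0) (Kf : forall i, K `&` epi (f i) = set0).
Hypothesis below : forall i y, y < M -> distS (x, y) K < distS (x, y) (epi (f i)).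
Let fm z := fmin i0 (fun i => f i z).
Let E i := equidistant K (epi (f i)) x.
Let Em := equidistant K (epi fm) x.

Lemma distS_epi_fmin y :
  distS (x, y) (epi fm) = fmin i0 (fun i => distS (x, y) (epi (f i))).
Proof. by rewrite epi_fmin (distS_bigcup i0) // => i; exact: epi_neq0. Qed.

Lemma equidistant_fmin_subset : Em `<=` \bigcup_i E i.
Proof.
move=> y Emy; have [j fj] := fmin_attained i0 (fun i => distS (x, y) (epi (f i))).
by exists j => //; rewrite /E /equidistant /= -fj -distS_epi_fmin.
Qed.

Lemma equidistant_ge i y : E i y -> M <= y.
Proof. by move=> Ey; rewrite leNgt; apply/negP => /(below i); rewrite Ey ltxx. Qed.

Lemma equidistant_fmin_le_sup i y : Em y -> y <= sup (E i).
Proof.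
move=> Emy; apply: le_sup_equidistant_epi => //.
by rewrite Emy distS_epi_fmin fmin_le.
Qed.

Lemma equidistant_fmin_neq0 : Em !=set0.
Proof.
have Kfm : K `&` epi fm = set0.
  by rewrite epi_fmin setI_bigcupr; apply: bigcup0 => i _.
have [|c _ Ec] := @equidistant_epi_ge _ _ K x fm cK K0 Kfm (M - 1); last by exists c.
rewrite distS_epi_fmin; apply: le_fmin => i; apply/ltW/below; lra.
Qed.

Lemma equidistant_fmin_bounds :
  fmin i0 (fun i => Gminus K (epi (f i)) x) <= Gminus K (epi fm) x /\
  Gminus K (epi fm) x <= Gplus K (epi fm) x /\
  Gplus K (epi fm) x <= fmin i0 (fun i => Gplus K (epi (f i)) x).
Proof.
have E_lb i : has_lbound (E i) by exists M => y; exact: equidistant_ge.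
have Em_lb : has_lbound Em.
  by exists M => y /equidistant_fmin_subset [i _]; exact: equidistant_ge.
have Em_ub : has_ubound Em by exists (sup (E i0)) => y; exact: equidistant_fmin_le_sup.
have [y Emy] := equidistant_fmin_neq0.
split; [|split].
- apply: lb_le_inf equidistant_fmin_neq0 _ => z /equidistant_fmin_subset [j _ Ejz].
  exact: le_trans (fmin_le _ _ j) (ge_inf (E_lb j) Ejz).
- exact: le_trans (ge_inf Em_lb Emy) (ub_le_sup Em_ub Emy).
- apply: le_fmin => i; apply: ge_sup equidistant_fmin_neq0 _ => z.
  exact: equidistant_fmin_le_sup.
Qed.

End equidistant_fmin.

Theorem theorem2 (R : realType) (n : nat) (I : finType) (i0 : I)
    (f : I -> 'rV[R]_n -> R) (K : set ('rV[R]_n * R)) :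
  (0 < n)%N ->
  (forall i, continuous (f i)) ->
  (forall i x, 0 < f i x) ->
  K !=set0 -> closed K ->
  (exists p, K p /\ p.2 <= 0) ->
  (forall i, K `&` epi (f i) = set0) ->
  let fm := fun x => fmin i0 (fun i => f i x) in
  forall x : 'rV[R]_n,
    fmin i0 (fun i => Gminus K (epi (f i)) x) <= Gminus K (epi fm) x /\
    Gminus K (epi fm) x <= Gplus K (epi fm) x /\
    Gplus K (epi fm) x <= fmin i0 (fun i => Gplus K (epi (f i)) x).
Proof.
move=> _ fc fpos K0 cK [p [Kp p0]] Kf fm x.
have : \forall y \near -oo, forall i, distS (x, y) K < distS (x, y) (epi (f i)).
  by apply: filter_forall => i; exact: distS_lt_epi_near_ninfty (fc i) (fpos i) Kp p0.
case=> M [_ below]; apply: (equidistant_fmin_bounds i0 cK K0 Kf (M := M)).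
by move=> i y /below.
Qed.
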